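(* Let $\Phi = \{\xi = (\tau_L,\delta_L,\tau_R,\delta_R) \in \mathbb{R}^4 : \tau_L > |\delta_L + 1|,\ \tau_R < -|\delta_R+1|\}$, $\Phi^{(3)} = \{\xi \in \Phi : \delta_L > 0, \delta_R < 0\}$, $\Phi^{(4)} = \{\xi \in \Phi : \delta_L < 0, \delta_R > 0\}$. Let $\alpha(\xi) = \tau_L\tau_R + (\delta_L-1)(\delta_R-1)$ and $g(\xi) = (\tau_R^2 - 2\delta_R,\ \delta_R^2,\ \tau_L\tau_R - \delta_L - \delta_R,\ \delta_L\delta_R)$. For $\xi \in \Phi$ let $\lambda_L^u>1$ be the eigenvalue of $\begin{bmatrix}\tau_L & 1\\ -\delta_L & 0\end{bmatrix}$ of modulus greater than one, $\lambda_R^u<-1$ the eigenvalue of $\begin{bmatrix}\tau_R & 1\\ -\delta_R & 0\end{bmatrix}$ of modulus greater than one, and $$\phi^+(\xi) = \delta_R - \big(\tau_R + \delta_L + \delta_R - (1+\tau_R)\lambda_L^u\big)\lambda_L^u,\qquad \phi^-(\xi) = \delta_R - \big(\delta_R + \tau_R - (1+\lambda_R^u)\lambda_L^u\big)\lambda_L^u,$$ $\phi_{\min}(\xi) = \min[\phi^+(\xi),\phi^-(\xi)]$. For $n\ge 0$ let $$\mathcal{R}^{(3)}_n = \{\xi \in \Phi^{(3)} : \phi_{\min}(g^n(\xi)) > 0,\ \phi_{\min}(g^{n+1}(\xi)) \le 0,\ \alpha(\xi) < 0\},$$ and for $n \ge 1$ let $$\mathcal{R}^{(4)}_n = \{\xi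 \in \Phi^{(4)} : \phi_{\min}(g^n(\xi)) > 0,\ \phi_{\min}(g^{n+1}(\xi)) \le 0,\ \alpha(\xi) < 0,\ \alpha(g(\xi)) < 0\}.$$ If $\xi \in \mathcal{R}^{(4)}_n$ with $n \ge 1$, then $g(\xi) \in \mathcal{R}^{(3)}_{n-1}$.
   Context: $g^n$ denotes the $n$-fold composition of $g$; the conditions in the set definitions are understood to include that the relevant iterates $g^k(\xi)$ lie in $\Phi$, so that $\phi_{\min}$ is defined at them. *)

From Stdlib Require Import Reals Lra.
Open Scope R_scope.

Record pt : Type := mkpt { tL : R; dL : R; tR : R; dR : R }.

Definition in_Phi (x : pt) : Prop :=
  tL x > Rabs (dL x + 1) /\ tR x < - Rabs (dR x + 1).

Definition in_Phi3 (x : pt) : Prop := in_Phi x /\ dL x > 0 /\ dR x < 0.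
Definition in_Phi4 (x : pt) : Prop := in_Phi x /\ dL x < 0 /\ dR x > 0.

Definition alpha (x : pt) : R := tL x * tR x + (dL x - 1) * (dR x - 1).

Definition g (x : pt) : pt :=
  mkpt (tR x ^ 2 - 2 * dR x) (dR x ^ 2)
       (tL x * tR x - dL x - dR x) (dL x * dR x).

Definition giter (n : nat) (x : pt) : pt := Nat.iter n g x.

(* The eigenvalues of [[tau, 1], [-delta, 0]] are the roots of
   lambda^2 - tau*lambda + delta.  On Phi the discriminant tau^2 - 4 delta
   is positive (tau^2 > (delta+1)^2 >= 4 delta), so both are real.
   lamLu: the eigenvalue > 1 of the left matrix (the larger root, tau_L > 0);
   lamRu: the eigenvalue < -1 of the right matrix (the smaller root, tau_R < 0). *)
Definition lamLu (x : pt) : R := (tL x + sqrt (tL x ^ 2 - 4 * dL x)) / 2.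
Definition lamRu (x : pt) : R := (tR x - sqrt (tR x ^ 2 - 4 * dR x)) / 2.

Definition phi_plus (x : pt) : R :=
  dR x - (tR x + dL x + dR x - (1 + tR x) * lamLu x) * lamLu x.
Definition phi_minus (x : pt) : R :=
  dR x - (dR x + tR x - (1 + lamRu x) * lamLu x) * lamLu x.
Definition phi_min (x : pt) : R := Rmin (phi_plus x) (phi_minus x).

(* R^(3)_n, n >= 0; the conditions include that the iterates lie in Phi. *)
Definition R3 (n : nat) (x : pt) : Prop :=
  in_Phi3 x /\
  in_Phi (giter n x) /\ phi_min (giter n x) > 0 /\
  in_Phi (giter (S n) x) /\ phi_min (giter (S n) x) <= 0 /\
  alpha x < 0.

(* R^(4)_n, n >= 1 (the restriction n >= 1 is imposed in the theorem). *)
Definition R4 (n : nat) (x : pt) : Prop :=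
  in_Phi4 x /\
  in_Phi (giter n x) /\ phi_min (giter n x) > 0 /\
  in_Phi (giter (S n) x) /\ phi_min (giter (S n) x) <= 0 /\
  alpha x < 0 /\ alpha (g x) < 0.

(* The map g sends the part of Phi where alpha < 0 back into Phi: the first
   condition for g xi reduces to tau_R^2 > (delta_R + 1)^2, the second to
   alpha xi < 0 together with |tau_L tau_R| > |(delta_L + 1)(delta_R + 1)|.
   Since g has delta-components (delta_R^2, delta_L delta_R), it also turns the
   sign pattern of Phi^(4) into that of Phi^(3).  The conditions on phi_min
   along the orbit are only re-indexed: g^k (g xi) = g^(k+1) xi. *)

From Stdlib Require Import Reals.
From Stdlib Require Import Lra Psatz.
Open Scope R_scope.

Lemma giter_g (n : nat) (x : pt) : giter n (g x) = giter (S n) x.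
Proof. apply Nat.iter_swap. Qed.

Lemma in_Phi_dR_sq (x : pt) : in_Phi x -> (dR x + 1) ^ 2 < tR x ^ 2.
Proof.
  intros [_ HR].
  assert (Habs : Rabs (dR x + 1) < - tR x) by lra.
  apply Rabs_def2 in Habs; nra.
Qed.

Lemma in_Phi_cross (x : pt) :
  in_Phi x -> Rabs ((dL x + 1) * (dR x + 1)) < - (tL x * tR x).
Proof.
  intros [HL HR].
  rewrite Rabs_mult.
  pose proof (Rabs_pos (dL x + 1)); pose proof (Rabs_pos (dR x + 1)).
  nra.
Qed.

Lemma g_in_Phi (x : pt) : in_Phi x -> alpha x < 0 -> in_Phi (g x).
Proof.
  intros HPhi Halpha.
  pose proof (in_Phi_dR_sq x HPhi) as HdR.
  pose proof (Rabs_def2 _ _ (in_Phi_cross x HPhi)) as Hcross.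
  unfold alpha in Halpha; unfold in_Phi, g; simpl; split.
  - rewrite Rabs_pos_eq by nra; nra.
  - enough (Rabs (dL x * dR x + 1) < - (tL x * tR x - dL x - dR x)) by lra.
    apply Rabs_def1; nra.
Qed.

Lemma g_in_Phi4_Phi3 (x : pt) : in_Phi4 x -> alpha x < 0 -> in_Phi3 (g x).
Proof.
  intros [HPhi [HdL HdR]] Halpha.
  split; [exact (g_in_Phi x HPhi Halpha)|].
  simpl; split; nra.
Qed.

Theorem proposition9p1 (n : nat) (x : pt) :
  (1 <= n)%nat -> R4 n x -> R3 (n - 1) (g x).
Proof.
  intros Hn [H4 [HPhi_n [Hphi_n [HPhi_Sn [Hphi_Sn [Halpha Halpha_g]]]]]].
  destruct n as [|m]; [inversion Hn|].
  rewrite Nat.sub_succ, Nat.sub_0_r.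
  unfold R3; rewrite !giter_g.
  exact (conj (g_in_Phi4_Phi3 x H4 Halpha)
    (conj HPhi_n (conj Hphi_n (conj HPhi_Sn (conj Hphi_Sn Halpha_g))))).
Qed.
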